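(* Let $F_6$ be the graph on vertices $a,b,c,d,e,f$ with edges $ab,ac,bc,ad,bd,be,ce,af,cf$, and let $(K_3)'_2$ be the graph obtained from the blow-up $P[K_2]$ of the path $P=u\,w\,v$ on three vertices by adding one edge between a vertex of the copy of $K_2$ replacing $u$ and a vertex of the copy of $K_2$ replacing $v$. If $G$ is a regular $K_3$-saturated graph, then $G[K_2]$ is a regular $F$-saturated graph for every graph $F$ such that $F$ contains a copy of $F_6$ and $(K_3)'_2$ contains a copy of $F$. In particular, $\liminf_{n\to\infty}\frac{\mathrm{rsat}(n,F)}{n^2}=0$ for every such $F$.
   Context: All graphs are finite and simple. For graphs $G,H$, the blow-up $G[H]$ is obtained by replacing each vertex of $G$ by a copy of $H$ and, for every edge $uv$ of $G$, adding all edges between the corresponding copies. A graph $G$ is $F$-saturated if it contains no copy of $F$ but adding any edge between non-adjacent vertices creates a copy of $F$. $\mathrm{rsat}(n,F)$ is the smallest number of edges of a regular $n$-vertex $F$-saturated graph, the $\liminf$ being over $n$ for which it is defined. *)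

From mathcomp Require Import all_boot.
Set Implicit Arguments. Unset Strict Implicit. Unset Printing Implicit Defensive.

Definition simple_graph (T : finType) (e : rel T) : Prop :=
  symmetric e /\ irreflexive e.

Definition contains (V T : finType) (f : rel V) (e : rel T) : Prop :=
  exists g : V -> T, injective g /\ forall u v, f u v -> e (g u) (g v).

Definition add_edge (T : finType) (e : rel T) (x y : T) : rel T :=
  fun u v => [|| e u v, (u == x) && (v == y) | (u == y) && (v == x)].

Definition saturated (V T : finType) (f : rel V) (e : rel T) : Prop :=
  ~ contains f e /\
  forall x y : T, x != y -> ~~ e x y -> contains f (add_edge e x y).

Definition regular (T : finType) (e : rel T) : Prop :=
  exists k, forall v : T, #|[set w | e v w]| = k.

Definition blowup (T U : finType) (e : rel T) (h : rel U) : rel (T * U) :=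
  fun p q => e p.1 q.1 || ((p.1 == q.1) && h p.2 q.2).

Definition K2 : rel bool := fun a b => a != b.
Definition K3 : rel 'I_3 := fun i j => i != j.

(* F_6 on a,b,c,d,e,f = 0,...,5 *)
Definition F6_edges : seq (nat * nat) :=
  [:: (0,1); (0,2); (1,2); (0,3); (1,3); (1,4); (2,4); (0,5); (2,5)].
Definition F6 : rel 'I_6 :=
  fun i j => ((val i, val j) \in F6_edges) || ((val j, val i) \in F6_edges).

(* path u w v = 0 1 2 *)
Definition P3 : rel 'I_3 :=
  fun i j => (val i == (val j).+1) || (val j == (val i).+1).

Definition K3'2 : rel ('I_3 * bool) :=
  fun p q => blowup P3 K2 p q ||
    [&& (val p.1 == 0) , (val q.1 == 2) , ~~ p.2 & ~~ q.2] ||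
    [&& (val p.1 == 2) , (val q.1 == 0) , ~~ p.2 & ~~ q.2].

Definition nedges (n : nat) (e : rel 'I_n) : nat :=
  #|[set p : 'I_n * 'I_n | e p.1 p.2 && (val p.1 < val p.2)]|.

(* rsat n F = m : the minimum number of edges of a regular n-vertex
   F-saturated graph is m (rsat n F is defined iff such m exists). *)
Definition rsat_is (V : finType) (f : rel V) (n m : nat) : Prop :=
  (exists e : rel 'I_n, simple_graph e /\ regular e /\ saturated f e /\ nedges e = m) /\
  (forall e : rel 'I_n, simple_graph e -> regular e -> saturated f e -> m <= nedges e).

(** Let G be K3-saturated.  If (v, b) and (w, c) are non-adjacent in G[K2], then v, w are
    distinct and non-adjacent in G, so they have a common neighbour z; the fibers over the
    path v z w span a copy of P[K2], and the new edge joins its two end fibers, which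
    yields (K3)'_2 and hence F.  On the other hand G[K2] contains no F6, hence no F: since
    G is triangle-free, every triangle of G[K2] has two vertices in a common fiber, and a
    fiber has only two vertices.  If a and b of F6 share a fiber, then triangle bce forces
    c and e to share one, and then no pair of the triangle acf can; the rotation
    (a b c)(d e f) of F6 reduces the other pairs of the triangle abc to this case.
    G[K2] is (2d+1)-regular when G is d-regular.

    For the density statement take for G the Kneser graph K(3j+2, j+1), which is regular
    and K3-saturated, of degree C(2j+1, j+1) <= (2/3)^(j+1) C(3j+2, j+1). *)

From Stdlib Require Import Classical Wf_nat.
From mathcomp Require Import all_boot zify.
Set Implicit Arguments. Unset Strict Implicit. Unset Printing Implicit Defensive.

Lemma contains_trans (U V W : finType) (h : rel U) (f : rel V) (e : rel W) :
  contains h f -> contains f e -> contains h e.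
Proof.
move=> [g1 [g1_inj g1_hom]] [g2 [g2_inj g2_hom]].
by exists (g2 \o g1); split=> [x y /g2_inj /g1_inj | u v /g1_hom /g2_hom].
Qed.

Lemma eq_contains (V T : finType) (f : rel V) (r r' : rel T) :
  r =2 r' -> contains f r -> contains f r'.
Proof. by move=> rr' [g [g_inj g_hom]]; exists g; split=> // u v /g_hom; rewrite rr'. Qed.

Lemma K3_third (i j : 'I_3) : i != j -> exists k : 'I_3, (k != i) && (k != j).
Proof.
have := ltn_ord i; have := ltn_ord j; rewrite -val_eqE /= => lt_j3 lt_i3 ij.
have lt_k : 3 - i - j < 3 by lia.
by exists (Ordinal lt_k); rewrite -!val_eqE /=; lia.
Qed.

Lemma contains_K3 (T : finType) (e : rel T) (x y z : T) :
  simple_graph e -> e x y -> e y z -> e x z -> contains K3 e.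
Proof.
move=> [e_sym e_irr] xy yz xz; pose g (i : 'I_3) := nth x [:: x; y; z] i.
have g_hom (i j : 'I_3) : K3 i j -> e (g i) (g j).
  by case: i j => [[|[|[|?]]] ?] [[|[|[|?]]] ?] // _; rewrite /g /= e_sym.
exists g; split=> // i j gij; apply/eqP; apply: contraT => /g_hom.
by rewrite gij e_irr.
Qed.

Section AddEdge.
Variables (T : finType) (e : rel T) (x y : T).

Lemma add_edge_sub u v : e u v -> add_edge e x y u v.
Proof. by rewrite /add_edge => ->. Qed.

Lemma add_edge_notl u v : u != x -> u != y -> add_edge e x y u v = e u v.
Proof. by rewrite /add_edge => /negbTE-> /negbTE->; rewrite !orbF. Qed.

Lemma add_edge_notr u v : v != x -> v != y -> add_edge e x y u v = e u v.
Proof. by rewrite /add_edge => /negbTE-> /negbTE->; rewrite !andbF !orbF. Qed.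

Lemma add_edge_simple : simple_graph e -> x != y -> simple_graph (add_edge e x y).
Proof.
move=> [e_sym e_irr] neq_xy; split=> [u v | u].
  by rewrite /add_edge e_sym (andbC (u == x)) (andbC (u == y)) [(_ && _) || _]orbC.
rewrite /add_edge e_irr /=; apply/norP; split; apply/andP=> -[/eqP-> /eqP yx];
  by rewrite yx eqxx in neq_xy.
Qed.

Lemma contains_K3_add_edge z :
  simple_graph e -> x != y -> e x z -> e z y -> contains K3 (add_edge e x y).
Proof.
move=> e_simple neq_xy xz zy; have [e_sym e_irr] := e_simple.
have [zx_neq zy_neq] : z != x /\ z != y.
  by split; [move: xz | move: zy]; apply: contraTneq => ->; rewrite e_irr.
apply: (@contains_K3 _ _ x y z); first exact: add_edge_simple.
- by rewrite /add_edge !eqxx orbT.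
- by rewrite add_edge_notr // e_sym.
- by rewrite add_edge_notr.
Qed.
End AddEdge.

Lemma K3_saturated_common_nbr (T : finType) (e : rel T) (x y : T) :
  saturated K3 e -> x != y -> ~~ e x y -> exists z, e x z && e z y.
Proof.
move=> [K3_free K3_sat] neq_xy nxy; have [g [g_inj g_hom]] := K3_sat x y neq_xy nxy.
have [/existsP[i /existsP[j /andP[/eqP gi /eqP gj]]] | no_xy] :=
  boolP [exists i, exists j, (g i == x) && (g j == y)].
- have ij : i != j by apply: contraNneq neq_xy => ij; rewrite -gi -gj ij.
  have [k /andP[ki kj]] := K3_third ij.
  have [gk_x gk_y] : g k != x /\ g k != y.
    by rewrite -gi -gj !(inj_eq g_inj).
  exists (g k); move: (g_hom i k) (g_hom k j); rewrite /K3 eq_sym ki kj gi gj.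
  by rewrite add_edge_notr // add_edge_notl // => -> // ->.
- case: K3_free; exists g; split=> // i j ij; move: (g_hom i j ij).
  rewrite /add_edge; case/or3P=> // /andP[/eqP gi /eqP gj]; case/existsP: no_xy.
    by exists i; apply/existsP; exists j; rewrite gi gj !eqxx.
  by exists j; apply/existsP; exists i; rewrite gi gj !eqxx.
Qed.

Lemma K2_simple : simple_graph K2.
Proof. by split=> [a b | a]; rewrite /K2 ?eqxx // eq_sym. Qed.

Section Blowup.
Variables (T U : finType) (e : rel T) (h : rel U).

Lemma blowup_simple : simple_graph e -> simple_graph h -> simple_graph (blowup e h).
Proof.
move=> [e_sym e_irr] [h_sym h_irr].
by split=> [p q | p]; rewrite /blowup; [rewrite e_sym h_sym eq_sym | rewrite e_irr h_irr andbF].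
Qed.

Lemma card_blowup_nbhd (p : T * U) : irreflexive e ->
  #|[set q | blowup e h p q]| = #|[set w | e p.1 w]| * #|U| + #|[set u | h p.2 u]|.
Proof.
move=> e_irr.
have -> : [set q | blowup e h p q] =
    setX [set w | e p.1 w] setT :|: setX [set p.1] [set u | h p.2 u].
  by apply/setP=> -[w u]; rewrite !inE /blowup /= eq_sym andbT.
rewrite cardsU cardsX cardsT cardsX cards1 mul1n.
suff -> : setX [set w | e p.1 w] setT :&: setX [set p.1] [set u | h p.2 u] = set0.
  by rewrite cards0 subn0.
by apply/setP=> -[w u]; rewrite !inE /=; case: eqP=> [->|]; rewrite ?e_irr ?andbF.
Qed.

Lemma blowup_triangle (p q r : T * U) :
  simple_graph e -> ~ contains K3 e ->
  blowup e h p q -> blowup e h q r -> blowup e h p r ->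
  [|| p.1 == q.1, q.1 == r.1 | p.1 == r.1].
Proof.
move=> e_simple K3_free; rewrite /blowup.
case: (p.1 =P q.1); case: (q.1 =P r.1); case: (p.1 =P r.1) => //= _ _ _.
rewrite !orbF => pq qr pr.
by case: K3_free; apply: (contains_K3 e_simple pq qr pr).
Qed.

End Blowup.

Lemma injective_fiber_bool (X T : Type) (g : X -> T * bool) (i j k : X) :
  injective g -> (g i).1 = (g j).1 -> (g j).1 = (g k).1 -> [\/ i = j, j = k | i = k].
Proof.
move=> g_inj ij jk.
have same_fiber u v : (g u).1 = (g v).1 -> (g u).2 = (g v).2 -> u = v.
  by move=> uv1 uv2; apply: g_inj; apply: injective_projections.
have : [|| (g i).2 == (g j).2, (g j).2 == (g k).2 | (g i).2 == (g k).2].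
  by case: (g i).2 (g j).2 (g k).2 => [] [] [].
case/or3P=> /eqP; [constructor 1 | constructor 2 | constructor 3]; apply: same_fiber => //.
by rewrite ij.
Qed.

Section F6Blowup.
Local Notation a := (@Ordinal 6 0 isT).
Local Notation b := (@Ordinal 6 1 isT).
Local Notation c := (@Ordinal 6 2 isT).
Local Notation d := (@Ordinal 6 3 isT).
Local Notation e := (@Ordinal 6 4 isT).
Local Notation f := (@Ordinal 6 5 isT).

Definition F6_rot (i : 'I_6) : 'I_6 := nth i [:: b; c; a; e; f; d] i.

Lemma F6_rot_inj : injective F6_rot.
Proof.
apply: (@can_inj _ _ _ (F6_rot \o F6_rot)) => i.
by apply: val_inj; case: i => [[|[|[|[|[|[|?]]]]]] ?].
Qed.

Lemma F6_rot_hom i j : F6 i j -> F6 (F6_rot i) (F6_rot j).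
Proof. by case: i j => [[|[|[|[|[|[|?]]]]]] ?] [[|[|[|[|[|[|?]]]]]] ?]. Qed.

Variables (T : finType) (adj : rel T).
Hypotheses (adj_simple : simple_graph adj) (K3_free : ~ contains K3 adj).

Let hom (g : 'I_6 -> T * bool) := forall u v, F6 u v -> blowup adj K2 (g u) (g v).

Let triangle g i j k : hom g -> F6 i j -> F6 j k -> F6 i k ->
  [|| (g i).1 == (g j).1, (g j).1 == (g k).1 | (g i).1 == (g k).1].
Proof.
move=> g_hom ij jk ik.
exact: blowup_triangle adj_simple K3_free (g_hom _ _ ij) (g_hom _ _ jk) (g_hom _ _ ik).
Qed.

Let hom_rot g : hom g -> hom (g \o F6_rot).
Proof. by move=> g_hom u v /F6_rot_hom /g_hom. Qed.

Let distinct_fibers_ab g : injective g -> hom g -> (g a).1 != (g b).1.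
Proof.
move=> g_inj g_hom; apply/eqP=> ab.
have no_triple i j k : i != j -> j != k -> i != k ->
    (g i).1 = (g j).1 -> (g j).1 = (g k).1 -> False.
  by move=> /eqP ? /eqP ? /eqP ? ij jk; case: (injective_fiber_bool g_inj ij jk).
case/or3P: (@triangle g b c e g_hom isT isT isT) => /eqP.
- by apply: (no_triple a b c).
- move=> ce; case/or3P: (@triangle g a c f g_hom isT isT isT) => /eqP.
  + by apply: (no_triple b a c).
  + by apply: (no_triple e c f).
  + by apply: (no_triple b a f).
- by apply: (no_triple a b e).
Qed.

Lemma blowup_K2_F6_free : ~ contains F6 (blowup adj K2).
Proof.
move=> [g [g_inj g_hom]].
have g_rot_inj : injective (g \o F6_rot) by apply: inj_comp F6_rot_inj.
case/or3P: (@triangle g a b c g_hom isT isT isT); apply/negP.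
- exact: distinct_fibers_ab.
- exact: (distinct_fibers_ab g_rot_inj (hom_rot g_hom)).
- rewrite eq_sym; apply: (distinct_fibers_ab (inj_comp g_rot_inj F6_rot_inj)).
  exact: (hom_rot (hom_rot g_hom)).
Qed.

End F6Blowup.

Section BlowupLift.
Variables (V T : finType) (f : rel V) (e : rel T) (g : V -> T) (flip : V -> bool).
Hypotheses (g_inj : injective g) (g_hom : forall u v, f u v -> e (g u) (g v)).

Definition blowup_lift (p : V * bool) : T * bool := (g p.1, flip p.1 (+) p.2).

Lemma blowup_lift_inj : injective blowup_lift.
Proof. by move=> [u s] [v t] [/g_inj uv]; subst v => /addbI->. Qed.

Lemma blowup_lift_hom p q :
  blowup f K2 p q -> blowup e K2 (blowup_lift p) (blowup_lift q).
Proof.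
rewrite /blowup /K2 /= => /orP[/g_hom-> // | /andP[/eqP pq st]].
by rewrite pq eqxx (can_eq (addKb _)) st orbT.
Qed.

End BlowupLift.

Lemma blowup_K2_add_edge_K3'2 (T : finType) (e : rel T) (x y : T * bool) :
  simple_graph e -> saturated K3 e -> x != y -> ~~ blowup e K2 x y ->
  contains K3'2 (add_edge (blowup e K2) x y).
Proof.
case: x y => [v b] [w c] [e_sym e_irr] e_sat neq_xy /norP[/= nvw same_fiber].
have neq_vw : v != w.
  by apply: contraNneq neq_xy => vw; move: same_fiber; rewrite vw eqxx negbK => /eqP->.
have [z /andP[vz zw]] := K3_saturated_common_nbr e_sat neq_vw nvw.
pose path (i : 'I_3) := nth v [:: v; z; w] i.
pose flip (i : 'I_3) := nth false [:: b; false; c] i.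
have path_inj : injective path.
  have [zv zw'] : z != v /\ z != w.
    by split; [move: vz | move: zw]; apply: contraTneq => ->; rewrite e_irr.
  move=> [[|[|[|?]]] ?] [[|[|[|?]]] ?] //; rewrite /path /= => ij;
    by apply: val_inj => //=; move: neq_vw zv zw'; rewrite ij !eqxx.
have path_hom i j : P3 i j -> e (path i) (path j).
  by case: i j => [[|[|[|?]]] ?] [[|[|[|?]]] ?] // _; rewrite /path /= e_sym.
exists (blowup_lift path flip); split; first exact: blowup_lift_inj.
move=> [i s] [j t]; rewrite /K3'2 -orbA => /or3P[ij | ij | ij].
- exact/add_edge_sub/(blowup_lift_hom flip path_hom).
- case/and4P: ij => /eqP /= i0 /eqP j2 /negbTE-> /negbTE->.
  by rewrite /blowup_lift /path /flip /= i0 j2 /= !addbF /add_edge !eqxx orbT.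
- case/and4P: ij => /eqP /= i2 /eqP j0 /negbTE-> /negbTE->.
  by rewrite /blowup_lift /path /flip /= i2 j0 /= !addbF /add_edge !eqxx !orbT.
Qed.

Lemma blowup_K2_degree (T : finType) (e : rel T) (p : T * bool) : irreflexive e ->
  #|[set q | blowup e K2 p q]| = #|[set w | e p.1 w]| * 2 + 1.
Proof.
move=> e_irr; rewrite card_blowup_nbhd // card_bool.
suff -> : [set u | K2 p.2 u] = [set ~~ p.2] by rewrite cards1.
by apply/setP=> u; rewrite !inE /K2; case: (p.2) u => -[].
Qed.

Lemma blowup_K2_regular_saturated (V : finType) (f : rel V) :
  contains F6 f -> contains f K3'2 ->
  forall (T : finType) (e : rel T), simple_graph e -> regular e -> saturated K3 e ->
  regular (blowup e K2) /\ saturated f (blowup e K2).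
Proof.
move=> F6_f f_K3'2 T e e_simple [d deg_e] [K3_free e_sat]; split.
  by exists (d * 2 + 1) => p; rewrite blowup_K2_degree ?deg_e //; case: e_simple.
split=> [f_B | x y neq_xy nxy].
  by apply: (blowup_K2_F6_free e_simple K3_free); apply: contains_trans f_B.
by apply: contains_trans f_K3'2 _; apply: blowup_K2_add_edge_K3'2.
Qed.

Section Relabel.
Variables (T' T : finType) (sigma : T' -> T).
Hypothesis sigma_bij : bijective sigma.

Lemma relpre_simple (e : rel T) : simple_graph e -> simple_graph (relpre sigma e).
Proof. by move=> [e_sym e_irr]; split=> [i j | i] /=; rewrite ?e_irr // e_sym. Qed.

Lemma card_relpre_nbhd (e : rel T) i :
  #|[set j | relpre sigma e i j]| = #|[set w | e (sigma i) w]|.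
Proof.
rewrite -(on_card_preimset (f := sigma)); last exact: onW_bij.
by apply: eq_card => j; rewrite !inE.
Qed.

Lemma contains_relpre (V : finType) (f : rel V) (e : rel T) :
  contains f e -> contains f (relpre sigma e).
Proof.
have [tau sigmaK tauK] := sigma_bij; move=> [g [g_inj g_hom]].
exists (tau \o g); split; first exact: inj_comp (can_inj tauK) g_inj.
by move=> u v /g_hom; rewrite /= !tauK.
Qed.

Lemma relpre_contains (V : finType) (f : rel V) (e : rel T) :
  contains f (relpre sigma e) -> contains f e.
Proof.
move=> [g [g_inj g_hom]]; exists (sigma \o g); split; last by move=> u v /g_hom.
exact: inj_comp (bij_inj sigma_bij) g_inj.
Qed.

Lemma saturated_relpre (V : finType) (f : rel V) (e : rel T) :
  saturated f e -> saturated f (relpre sigma e).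
Proof.
move=> [f_free f_sat]; split=> [/relpre_contains // | x y xy nxy].
have sigma_inj := bij_inj sigma_bij.
apply: (@eq_contains _ _ _ (relpre sigma (add_edge e (sigma x) (sigma y)))).
  by move=> u v; rewrite /add_edge /= !(inj_eq sigma_inj).
by apply/contains_relpre/f_sat; rewrite ?(inj_eq sigma_inj).
Qed.

End Relabel.

Lemma nedges_le_regular n (e : rel 'I_n) D :
  (forall i, #|[set j | e i j]| = D) -> nedges e <= n * D.
Proof.
move=> deg_e; rewrite /nedges.
apply: (@leq_trans #|[set p : 'I_n * 'I_n | e p.1 p.2]|).
  by apply/subset_leq_card/subsetP=> p; rewrite !inE => /andP[].
have -> : n * D = \sum_(i < n) \sum_(j | e i j) 1.
  transitivity (\sum_(i < n) D); first by rewrite sum_nat_const card_ord.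
  by apply: eq_bigr => i _; rewrite sum1_card -(deg_e i) cardsE.
by rewrite pair_big_dep /= sum1_card cardsE.
Qed.

Lemma rsat_is_exists (V : finType) (f : rel V) n M (e : rel 'I_n) :
  simple_graph e -> regular e -> saturated f e -> nedges e <= M ->
  exists2 m, m <= M & rsat_is f n m.
Proof.
move=> e_simple e_reg e_sat e_M.
pose P m := exists e : rel 'I_n,
  simple_graph e /\ regular e /\ saturated f e /\ nedges e = m.
have P_e : P (nedges e) by exists e.
have [m [[P_m m_min] _]] :=
  @dec_inh_nat_subset_has_unique_least_element P (fun m => classic (P m))
    (ex_intro P _ P_e).
exists m; first exact: leq_trans (introT leP (m_min _ P_e)) e_M.
split=> // e' e'_simple e'_reg e'_sat; apply/leP/m_min; by exists e'.
Qed.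

Lemma rsat_is_exists_card (V T : finType) (f : rel V) (e : rel T) D :
  simple_graph e -> (forall x, #|[set y | e x y]| = D) -> saturated f e ->
  exists2 m, m <= #|T| * D & rsat_is f #|T| m.
Proof.
move=> e_simple deg_e e_sat.
pose sigma := @enum_val T T.
have sigma_bij : bijective sigma.
  by exists enum_rank; [exact: enum_valK | exact: enum_rankK].
have deg_e' i : #|[set j | relpre sigma e i j]| = D.
  by rewrite (card_relpre_nbhd sigma_bij).
apply: (@rsat_is_exists _ _ _ _ (relpre sigma e)).
- exact: relpre_simple.
- by exists D.
- exact: saturated_relpre.
- exact: nedges_le_regular.
Qed.

Definition kneser_vertex (n k : nat) := {A : {set 'I_n} | #|A| == k}.

Definition kneser (n k : nat) : rel (kneser_vertex n k) :=
  fun A B => [disjoint val A & val B].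
Arguments kneser : clear implicits.

Section Kneser.
Variables n k : nat.

Lemma card_kneser_vertex : #|{: kneser_vertex n k}| = 'C(n, k).
Proof.
rewrite card_sig -[n in 'C(n, _)]card_ord -card_draws.
by apply: eq_card => A; rewrite !inE.
Qed.

Lemma card_setC_ord (A : {set 'I_n}) : #|~: A| = n - #|A|.
Proof. by rewrite cardsCs setCK card_ord. Qed.

Lemma kneser_simple : 0 < k -> simple_graph (kneser n k).
Proof.
move=> k_gt0; split=> [A B | [A cardA]]; first by rewrite /kneser disjoint_sym.
by rewrite /kneser /= -setI_eq0 setIid -cards_eq0 (eqP cardA) eqn0Ngt k_gt0.
Qed.

Lemma kneser_degree (A : kneser_vertex n k) :
  #|[set B | kneser n k A B]| = 'C(n - k, k).
Proof.
have -> : n - k = #|~: val A| by rewrite card_setC_ord (eqP (valP A)).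
rewrite -(card_imset _ val_inj) -cards_draws.
apply: eq_card => X; rewrite inE; apply/imsetP/andP=> [[B] | [sub_X cardX]].
  by rewrite inE /kneser disjoint_sym disjoints_subset => dAB ->; rewrite (valP B).
by exists (Sub X cardX); rewrite // inE /kneser /= disjoint_sym disjoints_subset.
Qed.

Lemma kneser_K3_free : n < 3 * k -> ~ contains K3 (kneser n k).
Proof.
move=> n_lt [g [_ g_hom]].
pose A i := val (g i).
have card_A i : #|A i| = k by exact/eqP/(valP (g i)).
have dis i j : i != j -> [disjoint A i & A j] by exact: g_hom.
pose i0 := @Ordinal 3 0 isT; pose i1 := @Ordinal 3 1 isT; pose i2 := @Ordinal 3 2 isT.
have sub0 : A i0 \subset ~: (A i1 :|: A i2).
  by rewrite setCU subsetI -!disjoints_subset !dis.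
have card12 : #|A i1 :|: A i2| = 2 * k.
  by rewrite cardsU (disjoint_setI0 (dis i1 i2 isT)) cards0 !card_A; lia.
by move: (subset_leq_card sub0); rewrite card_setC_ord card12 card_A; lia.
Qed.

Lemma kneser_saturated : 0 < k -> n < 3 * k <= n.+1 -> saturated K3 (kneser n k).
Proof.
move=> k_gt0 /andP[n_lt n_ge]; split; first exact: kneser_K3_free.
move=> A B neq_AB nAB.
have cardAB : #|val A :|: val B| < 2 * k.
  rewrite cardsU (eqP (valP A)) (eqP (valP B)).
  suff : 0 < #|val A :&: val B| by lia.
  by rewrite card_gt0; apply: contraNneq nAB => AB0; rewrite /kneser -setI_eq0 AB0.
have : 0 < 'C(#|~: (val A :|: val B)|, k) by rewrite bin_gt0 card_setC_ord; lia.
rewrite -cards_draws card_gt0 => /set0Pn[X]; rewrite inE => /andP[sub_X cardX].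
rewrite setCU subsetI in sub_X; case/andP: sub_X => sub_XA sub_XB.
apply: (@contains_K3_add_edge _ _ _ _ (Sub X cardX)) => //; first exact: kneser_simple.
  by rewrite /kneser /= disjoint_sym disjoints_subset.
by rewrite /kneser /= disjoints_subset.
Qed.

End Kneser.

Lemma ffact_scaled_le p q a b i :
  q <= p -> p * a <= q * b -> p ^ i * a ^_ i <= q ^ i * b ^_ i.
Proof.
move=> le_qp le_ab; elim: i => [|i IHi]; first by rewrite !ffactn0.
rewrite !ffactnSr !expnSr mulnACA [q ^ i * _ * _]mulnACA.
by apply: leq_mul IHi _; nia.
Qed.

Lemma binomial_scaled_le p q a b k :
  q <= p -> p * a <= q * b -> p ^ k * 'C(a, k) <= q ^ k * 'C(b, k).
Proof.
move=> le_qp le_ab; rewrite -(leq_pmul2r (fact_gt0 k)) -!mulnA !bin_ffact.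
exact: ffact_scaled_le.
Qed.

Lemma exp2_linear_le_exp3 k : 2 ^ k * (k + 2) <= 2 * 3 ^ k.
Proof.
elim: k => [//|k IHk]; rewrite !expnS.
have : 2 * (k.+1 + 2) <= 3 * (k + 2) by lia.
nia.
Qed.

Lemma kneser_degree_ratio j : (j + 3) * 'C(2 * j + 1, j.+1) <= 2 * 'C(3 * j + 2, j.+1).
Proof.
have ratio : 3 ^ j.+1 * 'C(2 * j + 1, j.+1) <= 2 ^ j.+1 * 'C(3 * j + 2, j.+1).
  by apply: binomial_scaled_le => //; lia.
have growth : 2 ^ j.+1 * (j + 3) <= 2 * 3 ^ j.+1.
  by move: (exp2_linear_le_exp3 j.+1); rewrite addSnnS.
rewrite -(@leq_pmul2l (2 ^ j.+1)) ?expn_gt0 // mulnA.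
apply: leq_trans (leq_mul growth (leqnn _)) _.
by rewrite mulnCA -mulnA leq_mul2l ratio orbT.
Qed.

Lemma blowup_kneser_sparse k N j m : 0 < k -> 3 * k + N <= j ->
  m <= 'C(3 * j + 2, j.+1) * 2 * ('C(2 * j + 1, j.+1) * 2 + 1) ->
  N <= 'C(3 * j + 2, j.+1) * 2 /\ k * m < ('C(3 * j + 2, j.+1) * 2) ^ 2.
Proof.
move=> k_gt0 le_j m_le; have ratio := kneser_degree_ratio j.
have s_gt0 : 0 < 'C(2 * j + 1, j.+1) by rewrite bin_gt0; lia.
set s := 'C(_, _) in ratio s_gt0 m_le *; set r := 'C(_, _) in ratio m_le *.
have deg_lt : k * (s * 2 + 1) < r * 2 by nia.
split; first by nia.
apply: leq_ltn_trans (leq_mul (leqnn k) m_le) _.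
by rewrite mulnCA expnS expn1 ltn_pmul2l //; lia.
Qed.

Theorem theorem3p2 (V : finType) (f : rel V) :
  simple_graph f -> contains F6 f -> contains f K3'2 ->
  (forall (T : finType) (e : rel T), simple_graph e ->
     regular e -> saturated K3 e ->
     regular (blowup e K2) /\ saturated f (blowup e K2)) /\
  (* liminf_{n} rsat(n,F)/n^2 = 0, over the n for which rsat(n,F) is defined:
     for every k > 0 and every N there is n >= N with rsat(n,F) defined and
     k * rsat(n,F) < n^2. *)
  (forall k N : nat, 0 < k -> exists n m, N <= n /\ rsat_is f n m /\ k * m < n ^ 2).
Proof.
move=> _ F6_f f_K3'2; have blowup_ok := blowup_K2_regular_saturated F6_f f_K3'2.
split=> // k N k_gt0; pose j := 3 * k + N; pose G := kneser (3 * j + 2) j.+1.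
have G_simple : simple_graph G by apply: kneser_simple.
have G_sat : saturated K3 G by apply: kneser_saturated => //; lia.
have [_ B_sat] := blowup_ok _ _ G_simple (ex_intro _ _ (@kneser_degree _ _)) G_sat.
have B_deg p : #|[set q | blowup G K2 p q]| = 'C(2 * j + 1, j.+1) * 2 + 1.
  by rewrite blowup_K2_degree ?kneser_degree; [congr ('C(_, _) * 2 + 1); lia | case: G_simple].
have [m m_le rsat_m] := rsat_is_exists_card (blowup_simple G_simple K2_simple) B_deg B_sat.
rewrite card_prod card_kneser_vertex card_bool in m_le rsat_m.
have [N_le m_lt] := blowup_kneser_sparse k_gt0 (leqnn j) m_le.
by exists ('C(3 * j + 2, j.+1) * 2), m.
Qed.
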